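(* Let $X>0$ and let $w:[0,X]\to\mathbb{R}$ be a smooth function with $w''(x)\ge w(x)$ and $w(x)\ge0$ for all $x\in[0,X]$, and $w'(0)\ge0$. Let $p:[0,X]\to\mathbb{R}^+$ be an increasing integrable function. Then \[\int_0^Xw(x)\,dx\le\frac{2}{p(X/2)}\int_0^Xw(x)p(x)\,dx.\]
   Context: $\mathbb{R}^+$ denotes the positive reals. *)

From Stdlib Require Import Reals.
From Coquelicot Require Import Coquelicot.
Open Scope R_scope.

(* w is smooth (C^infinity) on [a,b]: every iterated derivative of w exists
   (as a two-sided derivative of the function w : R -> R) at every point of [a,b]. *)
Definition smooth_on (w : R -> R) (a b : R) : Prop :=
  forall (n : nat) (x : R), a <= x <= b -> ex_derive (Derive_n w n) x.

Definition increasing_on (p : R -> R) (a b : R) : Prop :=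
  forall x y : R, a <= x -> x <= y -> y <= b -> p x <= p y.

From Stdlib Require Import Reals Lra Lia.
From Coquelicot Require Import Coquelicot.
Open Scope R_scope.

(* Since w'' >= w >= 0, w' is nondecreasing, hence nonnegative because w'(0) >= 0, so w is
   nondecreasing.  Then the integral of w over [0, X/2] is at most its integral over [X/2, X],
   where the weight p is at least p(X/2):
     int_0^X w <= 2 int_{X/2}^X w <= 2/p(X/2) int_{X/2}^X w p <= 2/p(X/2) int_0^X w p.
   The product w p is Riemann integrable because w is Lipschitz and p is bounded: it is the
   uniform limit of (w sampled on finer and finer grids) times p. *)

Lemma MVT_interval (f df : R -> R) (a b x y : R) :
  (forall t, a <= t <= b -> is_derive f t (df t)) ->
  a <= x <= b -> a <= y <= b ->
  exists c, a <= c <= b /\ f y - f x = df c * (y - x).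
Proof.
  intros Hd Hx Hy.
  assert (Hin : forall t, Rmin x y <= t <= Rmax x y -> a <= t <= b).
  { intros t Ht; unfold Rmin, Rmax in Ht; destruct Rle_dec; lra. }
  destruct (MVT_gen f x y df) as [c [Hc Heq]].
  - intros t Ht; apply Hd, Hin; lra.
  - intros t Ht; apply continuity_pt_filterlim.
    apply (ex_derive_continuous (K := R_AbsRing) (V := R_NormedModule)).
    exists (df t); apply Hd, Hin, Ht.
  - exists c; split; [apply Hin, Hc | exact Heq].
Qed.

Lemma increasing_on_derive_ge0 (f df : R -> R) (a b : R) :
  (forall x, a <= x <= b -> is_derive f x (df x)) ->
  (forall x, a <= x <= b -> 0 <= df x) ->
  increasing_on f a b.
Proof.
  intros Hd Hdf x y Hax Hxy Hyb.
  destruct (MVT_interval f df a b x y Hd) as [c [Hc Heq]]; try lra.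
  assert (0 <= df c * (y - x)) by (apply Rmult_le_pos; [apply Hdf, Hc | lra]).
  lra.
Qed.

Lemma lipschitz_derive_bounded (f df : R -> R) (a b L : R) :
  (forall x, a <= x <= b -> is_derive f x (df x)) ->
  (forall x, a <= x <= b -> Rabs (df x) <= L) ->
  forall x y, a <= x <= b -> a <= y <= b -> Rabs (f y - f x) <= L * Rabs (y - x).
Proof.
  intros Hd HL x y Hx Hy.
  destruct (MVT_interval f df a b x y Hd Hx Hy) as [c [Hc ->]].
  rewrite Rabs_mult; apply Rmult_le_compat_r; [apply Rabs_pos | apply HL, Hc].
Qed.

Lemma ex_RInt_is_derive (f df : R -> R) (a b : R) :
  a <= b -> (forall x, a <= x <= b -> is_derive f x (df x)) -> ex_RInt f a b.
Proof.
  intros Hab Hd; apply (ex_RInt_continuous (V := R_CompleteNormedModule)); intros x Hx.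
  rewrite Rmin_left, Rmax_right in Hx by lra.
  apply (ex_derive_continuous (K := R_AbsRing) (V := R_NormedModule)).
  exists (df x); apply Hd, Hx.
Qed.

Lemma smooth_on_is_derive (w : R -> R) (a b : R) (n : nat) :
  smooth_on w a b ->
  forall x, a <= x <= b -> is_derive (Derive_n w n) x (Derive_n w (S n) x).
Proof. intros Hw x Hx; apply Derive_correct, Hw, Hx. Qed.

Definition clamp (a b x : R) : R := Rmax a (Rmin b x).

Lemma clamp_in (a b x : R) : a <= b -> a <= clamp a b x <= b.
Proof. intros; unfold clamp, Rmax, Rmin; repeat destruct Rle_dec; lra. Qed.

Lemma clamp_id (a b x : R) : a <= x <= b -> clamp a b x = x.
Proof. intros; unfold clamp, Rmax, Rmin; repeat destruct Rle_dec; lra. Qed.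

Definition grid_floor (a h x : R) : R := a + h * IZR (Int_part ((x - a) / h)).

Lemma grid_floor_bounds (a h x : R) : 0 < h -> a <= x ->
  a <= grid_floor a h x <= x /\ x < grid_floor a h x + h.
Proof.
  intros Hh Hx; unfold grid_floor.
  set (r := (x - a) / h).
  assert (Hr : 0 <= r) by (apply Rdiv_le_0_compat; lra).
  assert (Ex : x = a + h * r) by (unfold r; field; lra).
  destruct (base_Int_part r) as [Hle Hgt].
  assert (Hnn : 0 <= IZR (Int_part r)).
  { apply IZR_le; assert (-1 < Int_part r)%Z by (apply lt_IZR; lra); lia. }
  rewrite Ex.
  split; [split|].
  - assert (0 <= h * IZR (Int_part r)) by (apply Rmult_le_pos; lra); lra.
  - apply Rplus_le_compat_l, Rmult_le_compat_l; lra.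
  - assert (h * r < h * (IZR (Int_part r) + 1)) by (apply Rmult_lt_compat_l; lra); lra.
Qed.

Lemma grid_floor_cell (a h x : R) (k : nat) : 0 < h ->
  a + INR k * h < x < a + INR (S k) * h -> grid_floor a h x = a + INR k * h.
Proof.
  intros Hh Hx; unfold grid_floor.
  rewrite S_INR in Hx.
  assert (Hk : Z.of_nat k = Int_part ((x - a) / h)).
  { apply Int_part_spec; rewrite <- INR_IZR_INZ; split.
    - apply (Rmult_lt_reg_r h); [lra|].
      replace (((x - a) / h - 1) * h) with (x - a - h) by (field; lra); lra.
    - apply (Rmult_le_reg_r h); [lra|].
      replace ((x - a) / h * h) with (x - a) by (field; lra); lra. }
  rewrite <- Hk, <- INR_IZR_INZ; ring.
Qed.

Lemma ex_RInt_mult_piecewise_const (phi g : R -> R) (c : nat -> R) (a h : R) (N : nat) :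
  0 < h ->
  (forall k x, (k < N)%nat -> a + INR k * h < x < a + INR (S k) * h -> phi x = c k) ->
  ex_RInt g a (a + INR N * h) ->
  ex_RInt (fun x => phi x * g x) a (a + INR N * h).
Proof.
  intros Hh; induction N as [|N IH]; intros Hphi Hg.
  { rewrite Rmult_0_l, Rplus_0_r; apply ex_RInt_point. }
  assert (HN : a <= a + INR N * h <= a + INR (S N) * h).
  { rewrite S_INR; pose proof (pos_INR N); split; [|lra].
    assert (0 <= INR N * h) by (apply Rmult_le_pos; lra); lra. }
  apply ex_RInt_Chasles with (a + INR N * h).
  - apply IH; [intros k x Hk; apply Hphi; lia|].
    apply (ex_RInt_Chasles_1 (V := R_CompleteNormedModule)) with (a + INR (S N) * h); assumption.
  - apply (ex_RInt_ext (fun x => scal (c N) (g x))).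
    + intros x Hx; rewrite Rmin_left, Rmax_right in Hx by lra.
      rewrite (Hphi N x); [reflexivity | lia | exact Hx].
    + apply (ex_RInt_scal (V := R_NormedModule) g).
      apply (ex_RInt_Chasles_2 (V := R_CompleteNormedModule)) with a; assumption.
Qed.

Lemma filterlim_uniform_bound (F : nat -> R -> R) (G : R -> R) (K : R) :
  (forall n t, Rabs (F n t - G t) <= K / INR (S n)) ->
  filterlim F eventually (locally (G : fct_UniformSpace R R_CompleteNormedModule)).
Proof.
  intros HF P [eps HP].
  assert (HK : 0 <= K).
  { specialize (HF 0%nat 0); simpl in HF; pose proof (Rabs_pos (F 0%nat 0 - G 0)); lra. }
  destruct (archimed_cor1 (eps / (K + 1))) as [N [HN HN0]].
  { apply Rdiv_lt_0_compat; [apply cond_pos | lra]. }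
  exists N; intros n Hn; apply HP; intros t.
  change (Rabs (F n t - G t) < eps).
  apply Rle_lt_trans with (K / INR (S n)); [apply HF|].
  assert (HNn : K / INR (S n) <= (K + 1) * / INR N).
  { unfold Rdiv; apply Rmult_le_compat; [lra | left; apply Rinv_0_lt_compat, lt_0_INR; lia | lra |].
    apply Rinv_le_contravar; [apply lt_0_INR; lia | apply le_INR; lia]. }
  assert ((K + 1) * / INR N < (K + 1) * (eps / (K + 1))) by (apply Rmult_lt_compat_l; lra).
  replace (pos eps) with ((K + 1) * (eps / (K + 1))) by (field; lra); lra.
Qed.

Lemma ex_RInt_mult_lipschitz (f g : R -> R) (a b L M : R) :
  a <= b -> 0 <= L ->
  (forall x y, a <= x <= b -> a <= y <= b -> Rabs (f y - f x) <= L * Rabs (y - x)) ->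
  (forall x, a <= x <= b -> Rabs (g x) <= M) ->
  ex_RInt g a b -> ex_RInt (fun x => f x * g x) a b.
Proof.
  intros Hab HL Hf Hg Hgi.
  destruct (Req_dec a b) as [<- | Hne]; [apply ex_RInt_point|].
  set (h := fun n : nat => (b - a) / INR (S n)).
  assert (Hh : forall n, 0 < h n)
    by (intros n; apply Rdiv_lt_0_compat; [lra | apply lt_0_INR; lia]).
  assert (Hhb : forall n, a + INR (S n) * h n = b)
    by (intros n; unfold h; field; apply not_0_INR; lia).
  set (F := fun n x => f (grid_floor a (h n) (clamp a b x)) * g (clamp a b x)).
  set (G := fun x => f (clamp a b x) * g (clamp a b x)).
  assert (HF : forall n, ex_RInt (F n) a b).
  { intros n.
    apply (ex_RInt_ext (fun x => f (grid_floor a (h n) x) * g x)).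
    { intros x Hx; rewrite Rmin_left, Rmax_right in Hx by lra.
      unfold F; rewrite clamp_id by lra; reflexivity. }
    rewrite <- (Hhb n).
    apply ex_RInt_mult_piecewise_const with (c := fun k => f (a + INR k * h n));
      [apply Hh | | now rewrite Hhb].
    intros k x _ Hx; now rewrite (grid_floor_cell a (h n) x k (Hh n) Hx). }
  assert (HFG : forall n t, Rabs (F n t - G t) <= L * M * (b - a) / INR (S n)).
  { intros n t; unfold F, G.
    set (x := clamp a b t); assert (Hx : a <= x <= b) by apply clamp_in, Hab.
    destruct (grid_floor_bounds a (h n) x (Hh n) (proj1 Hx)) as [Hlo Hup].
    rewrite <- Rmult_minus_distr_r, Rabs_mult.
    assert (Hdf : Rabs (f (grid_floor a (h n) x) - f x) <= L * h n).
    { eapply Rle_trans; [apply Hf; lra|].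
      apply Rmult_le_compat_l; [exact HL|]; rewrite Rabs_left1; lra. }
    replace (L * M * (b - a) / INR (S n)) with (L * h n * M)
      by (unfold h; field; apply not_0_INR; lia).
    apply Rmult_le_compat; [apply Rabs_pos | apply Rabs_pos | exact Hdf | apply Hg, Hx]. }
  (* [filterlim_RInt] needs uniform convergence on all of R, hence the clamping to [a, b]. *)
  destruct (filterlim_RInt F a b eventually eventually_filter G (fun n => RInt (F n) a b))
    as [I [_ HI]].
  - intros n; apply (RInt_correct (V := R_CompleteNormedModule)), HF.
  - apply filterlim_uniform_bound with (K := L * M * (b - a)), HFG.
  - apply (ex_RInt_ext G); [|exists I; exact HI].
    intros x Hx; rewrite Rmin_left, Rmax_right in Hx by lra.
    unfold G; rewrite clamp_id by lra; reflexivity.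
Qed.

Lemma RInt_le_twice_upper_half (f : R -> R) (a b : R) :
  a <= b -> increasing_on f a b -> ex_RInt f a b ->
  RInt f a b <= 2 * RInt f ((a + b) / 2) b.
Proof.
  intros Hab Hf Hi.
  set (m := (a + b) / 2).
  assert (Hlo : ex_RInt f a m)
    by (apply (ex_RInt_Chasles_1 (V := R_CompleteNormedModule)) with b; [unfold m; lra | exact Hi]).
  assert (Hhi : ex_RInt f m b)
    by (apply (ex_RInt_Chasles_2 (V := R_CompleteNormedModule)) with a; [unfold m; lra | exact Hi]).
  rewrite <- (RInt_Chasles (V := R_CompleteNormedModule) f a m b Hlo Hhi).
  (* translating [a, m] onto [m, b] can only increase a nondecreasing integrand *)
  assert (Ea : 1 * m + (a - m) = a) by ring.
  assert (Eb : 1 * b + (a - m) = m) by (unfold m; field).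
  pose proof (RInt_comp_lin (V := R_CompleteNormedModule) f 1 (a - m) m b) as Eshift.
  pose proof (ex_RInt_comp_lin (V := R_CompleteNormedModule) f 1 (a - m) m b) as Hshift.
  rewrite Ea, Eb in Eshift, Hshift.
  rewrite <- (Eshift Hlo).
  change (plus ?u ?v) with (u + v).
  replace (2 * RInt f m b) with (RInt f m b + RInt f m b) by ring.
  apply Rplus_le_compat_r, RInt_le; [unfold m; lra | exact (Hshift Hlo) | exact Hhi |].
  intros x Hx; change (1 * f (1 * x + (a - m)) <= f x); rewrite !Rmult_1_l.
  apply Hf; unfold m in *; lra.
Qed.

Lemma RInt_mult_ge_weight_left (f p : R -> R) (a b : R) :
  a <= b -> (forall x, a <= x <= b -> 0 <= f x) -> increasing_on p a b ->
  ex_RInt f a b -> ex_RInt (fun x => f x * p x) a b ->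
  p a * RInt f a b <= RInt (fun x => f x * p x) a b.
Proof.
  intros Hab Hf Hp Hfi Hfpi.
  change (scal (p a) (RInt f a b) <= RInt (fun x => f x * p x) a b).
  rewrite <- (RInt_scal (V := R_CompleteNormedModule) f a b (p a) Hfi).
  apply RInt_le; [exact Hab | apply (ex_RInt_scal (V := R_NormedModule) f), Hfi | exact Hfpi |].
  intros x Hx; change (p a * f x <= f x * p x); rewrite Rmult_comm.
  apply Rmult_le_compat_l; [apply Hf | apply Hp]; lra.
Qed.

Lemma RInt_le_mid_weight (f p : R -> R) (a b : R) :
  a <= b -> (forall x, a <= x <= b -> 0 <= f x) -> increasing_on f a b ->
  (forall x, a <= x <= b -> 0 < p x) -> increasing_on p a b ->
  ex_RInt f a b -> ex_RInt (fun x => f x * p x) a b ->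
  RInt f a b <= 2 / p ((a + b) / 2) * RInt (fun x => f x * p x) a b.
Proof.
  intros Hab Hf0 Hf Hp0 Hp Hfi Hfpi.
  set (m := (a + b) / 2).
  assert (Ham : a <= m <= b) by (unfold m; lra).
  assert (Hpm : 0 < p m) by (apply Hp0, Ham).
  assert (Hfi2 : ex_RInt f m b)
    by (apply (ex_RInt_Chasles_2 (V := R_CompleteNormedModule)) with a; assumption).
  assert (Hfpi1 : ex_RInt (fun x => f x * p x) a m)
    by (apply (ex_RInt_Chasles_1 (V := R_CompleteNormedModule)) with b; assumption).
  assert (Hfpi2 : ex_RInt (fun x => f x * p x) m b)
    by (apply (ex_RInt_Chasles_2 (V := R_CompleteNormedModule)) with a; assumption).
  assert (Hhalf : RInt f a b <= 2 * RInt f m b) by (apply RInt_le_twice_upper_half; assumption).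
  assert (Hweight : p m * RInt f m b <= RInt (fun x => f x * p x) m b).
  { apply RInt_mult_ge_weight_left; try assumption; [lra | intros x Hx; apply Hf0; lra |].
    intros x y Hx Hxy Hy; apply Hp; lra. }
  assert (Hlow : 0 <= RInt (fun x => f x * p x) a m).
  { apply RInt_ge_0; [lra | exact Hfpi1 |].
    intros x Hx; apply Rmult_le_pos; [apply Hf0; lra|].
    left; apply Hp0; lra. }
  assert (Hsplit : RInt (fun x => f x * p x) a b
                   = RInt (fun x => f x * p x) a m + RInt (fun x => f x * p x) m b)
    by exact (eq_sym (RInt_Chasles (V := R_CompleteNormedModule) _ a m b Hfpi1 Hfpi2)).
  rewrite Hsplit.
  apply Rle_trans with (2 / p m * (p m * RInt f m b)).
  - replace (2 / p m * (p m * RInt f m b)) with (2 * RInt f m b) by (field; lra); exact Hhalf.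
  - apply Rmult_le_compat_l; [apply Rdiv_le_0_compat; lra | lra].
Qed.

Theorem proposition5p5 (X : R) (w p : R -> R) :
  0 < X ->
  smooth_on w 0 X ->
  (forall x, 0 <= x <= X -> Derive_n w 2 x >= w x) ->
  (forall x, 0 <= x <= X -> w x >= 0) ->
  Derive w 0 >= 0 ->
  (forall x, 0 <= x <= X -> 0 < p x) ->
  increasing_on p 0 X ->
  ex_RInt p 0 X ->
  RInt w 0 X <= 2 / p (X / 2) * RInt (fun x => w x * p x) 0 X.
Proof.
  intros HX Hs Hw2 Hw0 Hdw0 Hp0 Hp Hpi.
  assert (Hdw : forall x, 0 <= x <= X -> is_derive w x (Derive w x))
    by exact (smooth_on_is_derive w 0 X 0 Hs).
  assert (Hd2w : forall x, 0 <= x <= X -> is_derive (Derive w) x (Derive_n w 2 x))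
    by exact (smooth_on_is_derive w 0 X 1 Hs).
  assert (Hdw_mono : increasing_on (Derive w) 0 X).
  { apply increasing_on_derive_ge0 with (Derive_n w 2); [exact Hd2w|].
    intros x Hx; specialize (Hw2 x Hx); specialize (Hw0 x Hx); lra. }
  assert (Hdw_pos : forall x, 0 <= x <= X -> 0 <= Derive w x).
  { intros x Hx; pose proof (Hdw_mono 0 x (Rle_refl 0) (proj1 Hx) (proj2 Hx)); lra. }
  assert (Hw_mono : increasing_on w 0 X)
    by exact (increasing_on_derive_ge0 w (Derive w) 0 X Hdw Hdw_pos).
  assert (Hwpi : ex_RInt (fun x => w x * p x) 0 X).
  { apply (ex_RInt_mult_lipschitz w p 0 X (Derive w X) (p X)); try lra;
      [apply Hdw_pos; lra | | | exact Hpi].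
    - apply lipschitz_derive_bounded with (Derive w); [exact Hdw|].
      intros x Hx; rewrite Rabs_pos_eq by (apply Hdw_pos, Hx); apply Hdw_mono; lra.
    - intros x Hx; rewrite Rabs_pos_eq by (left; apply Hp0, Hx); apply Hp; lra. }
  replace (X / 2) with ((0 + X) / 2) by field.
  apply RInt_le_mid_weight; try assumption; [lra | |].
  - intros x Hx; apply Rge_le, Hw0, Hx.
  - apply (ex_RInt_is_derive w (Derive w)); [lra | exact Hdw].
Qed.
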